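(* Let $\mathcal{H}$ be a real Hilbert space, $A:\mathcal{H}\rightrightarrows\mathcal{H}$ maximal monotone with $A^{-1}(0)\neq\emptyset$, $\theta>0$, $p\geq1$ an integer, and suppose $(x,\lambda):[0,t_0]\to\mathcal{H}\times(0,+\infty)$ is a solution of \[ \dot{x}(t)+x(t)-(I+\lambda(t)A)^{-1}x(t)=0,\qquad \lambda(t)\,\|(I+\lambda(t)A)^{-1}x(t)-x(t)\|^{p-1}=\theta, \] with $x(0)\in\{x:0\notin Ax\}$, $x$ continuously differentiable and $\lambda$ locally Lipschitz. Then $\lambda(\cdot)$ is nondecreasing.
   Context: $(I+\lambda A)^{-1}$ is the resolvent of $A$ of index $\lambda>0$. *)

From HB Require Import structures.
From mathcomp Require Import all_boot all_order all_algebra.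
From mathcomp Require Import all_classical all_reals all_analysis.
Set Implicit Arguments. Unset Strict Implicit. Unset Printing Implicit Defensive.
Import Order.TTheory GRing.Theory Num.Theory.
Import numFieldNormedType.Exports.
Local Open Scope classical_set_scope.
Local Open Scope ring_scope.

Definition is_inner_product (R : realType) (H : normedModType R)
  (ip : H -> H -> R) : Prop :=
  [/\ (forall x y, ip x y = ip y x),
      (forall a x y z, ip (a *: x + y) z = a * ip x z + ip y z) &
      (forall x, ip x x = `|x| ^+ 2)].

(* set-valued operators H ⇉ H are relations: A x u means u ∈ A x *)
Definition monotone_op (R : realType) (H : normedModType R)
  (ip : H -> H -> R) (A : H -> set H) : Prop :=
  forall x y u v, A x u -> A y v -> 0 <= ip (u - v) (x - y).

Definition maximal_monotone (R : realType) (H : normedModType R)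
  (ip : H -> H -> R) (A : H -> set H) : Prop :=
  monotone_op ip A /\
  forall B : H -> set H, monotone_op ip B ->
    (forall x u, A x u -> B x u) -> forall x u, B x u -> A x u.

(* The resolvent (I + lam A)^{-1} x : the point y with x ∈ y + lam A y
   (unique and existing when A is maximal monotone and lam > 0). *)
Definition resolvent (R : realType) (H : normedModType R)
  (A : H -> set H) (lam : R) (x : H) : H :=
  xget 0 [set y | exists u, A y u /\ x = y + lam *: u].

Definition derivative_on (R : realType) (H : normedModType R)
  (a b : R) (x x' : R -> H) : Prop :=
  forall t, t \in `[a, b] ->
    (fun s => (s - t)^-1 *: (x s - x t))
      @ (within (fun s => s \in `[a, b]) t^') --> x' t.

Definition C1_on (R : realType) (H : normedModType R)
  (a b : R) (x x' : R -> H) : Prop :=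
  derivative_on a b x x' /\ {within [set s | s \in `[a, b]], continuous x'}.

Definition locally_lipschitz_on (R : realType) (a b : R) (f : R -> R) : Prop :=
  forall t, t \in `[a, b] -> exists2 d : R, 0 < d & exists L : R,
    forall s r, s \in `[a, b] -> r \in `[a, b] ->
      `|s - t| < d -> `|r - t| < d -> `|f s - f r| <= L * `|s - r|.

From HB Require Import structures.
From mathcomp Require Import all_boot all_order all_algebra.
From mathcomp Require Import all_classical all_reals all_analysis.
From mathcomp Require Import ring lra.
Import Order.TTheory GRing.Theory Num.Theory.
Import numFieldNormedType.Exports.
Local Open Scope classical_set_scope.
Local Open Scope ring_scope.
Set Implicit Arguments. Unset Strict Implicit. Unset Printing Implicit Defensive.

(* Write J t for the resolvent of index lam t at x t and v t := (x t - J t) / lam t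
   for the Yosida approximation, so that x = J + lam v, x' = - lam v, and the
   constraint reads lam (lam |v|)^(p-1) = theta. For r < r + h, monotonicity of A
   at the pairs (J r, v r) and (J (r + h), v (r + h)) gives
     lam (r + h) |v (r + h)| <= max (lam (r + h)) ((1 - h) lam r) |v r| + o(h).
   If lam (r + h) < lam r - e h, the right-hand side is at most lam r |v r|: then
   lam |v| does not increase while lam decreases, contradicting the constraint.
   So the upper right Dini derivative of the continuous function lam is
   nonnegative, and lam is nondecreasing. *)

Lemma scaled_norm_le_of_quadratic (R : realFieldType) (l m a b d W : R) :
  0 <= l -> 0 <= m -> 0 <= a -> 0 <= W -> b - a <= d -> d <= a + b ->
  (l + m) * d ^+ 2 + (l - m) * (b ^+ 2 - a ^+ 2) <= 2 * d * W ->
  l * b <= Num.max l m * a + W.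
Proof.
move=> l0 m0 a0 W0 bad dab quad.
have [ba|ab] := leP b a.
  have /(ler_wpM2r a0) : l <= Num.max l m by rewrite le_max lexx.
  by have := ler_wpM2l l0 ba; lra.
have d0 : 0 < d by lra.
have dlm : 0 <= (l + m) * d * (d - (b - a)) by rewrite !mulr_ge0 //; lra.
suff : 0 <= d * (Num.max l m * a + W - l * b) by rewrite pmulr_rge0 // subr_ge0.
have [ml|lm] := lerP m l.
- have : 0 <= (l - m) * (b - a) * (a + b - d) by rewrite !mulr_ge0 //; lra.
  nra.
- have : 0 <= (m - l) * (b + a) * (d - (b - a)) by rewrite !mulr_ge0 //; lra.
  nra.
Qed.

Section inner_product.
Variables (R : realType) (H : normedModType R) (ip : H -> H -> R).
Hypothesis ipP : is_inner_product ip.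

Lemma ipC x y : ip x y = ip y x.
Proof. by case: ipP. Qed.

Lemma ipDl x y z : ip (x + y) z = ip x z + ip y z.
Proof. by case: ipP => _ lin _; have := lin 1 x y z; rewrite scale1r mul1r. Qed.

Lemma ip0l z : ip 0 z = 0.
Proof. by have := ipDl 0 0 z; rewrite addr0; lra. Qed.

Lemma ipZl a x z : ip (a *: x) z = a * ip x z.
Proof. by case: ipP => _ lin _; rewrite -[a *: x]addr0 lin ip0l addr0. Qed.

Lemma ipBl x y z : ip (x - y) z = ip x z - ip y z.
Proof. by rewrite ipDl -scaleN1r ipZl mulN1r. Qed.

Lemma ipDr x y z : ip z (x + y) = ip z x + ip z y.
Proof. by rewrite ipC ipDl !(ipC z). Qed.

Lemma ipZr a x z : ip z (a *: x) = a * ip z x.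
Proof. by rewrite ipC ipZl ipC. Qed.

Lemma ipBr x y z : ip z (x - y) = ip z x - ip z y.
Proof. by rewrite ipC ipBl !(ipC z). Qed.

Lemma ip0r z : ip z 0 = 0.
Proof. by rewrite ipC ip0l. Qed.

Lemma ipxx x : ip x x = `|x| ^+ 2.
Proof. by case: ipP. Qed.

Lemma ip_le x y : ip x y <= `|x| * `|y|.
Proof.
have [->|x0] := eqVneq x 0; first by rewrite ip0l normr0 mul0r.
have [->|y0] := eqVneq y 0; first by rewrite ip0r normr0 mulr0.
have nxy : 0 < `|x| * `|y| by rewrite mulr_gt0 ?normr_gt0.
have : 0 <= ip (`|y| *: x - `|x| *: y) (`|y| *: x - `|x| *: y) by rewrite ipxx sqr_ge0.
by rewrite !ipBl !ipBr !ipZl !ipZr !ipxx (ipC y x); nra.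
Qed.

Lemma ip_polar x y : `|x + y| ^+ 2 = `|x| ^+ 2 + 2 * ip x y + `|y| ^+ 2.
Proof. by rewrite -!ipxx ipDl !ipDr (ipC y x); ring. Qed.

(* Two-point form of three facts on resolvents: lam |-> |x - J_lam x| is
   nondecreasing, lam |-> |x - J_lam x| / lam is nonincreasing, and I - J_lam
   is nonexpansive. *)
Lemma monotone_pair_estimate y1 u1 y2 u2 l m :
  0 <= l -> 0 <= m -> 0 <= ip (u2 - u1) (y2 - y1) ->
  l * `|u2| <= Num.max l m * `|u1| + `|(y2 + l *: u2) - (y1 + m *: u1)|.
Proof.
move=> l0 m0 mono; set w := _ - (y1 + _); set D := u2 - u1.
have Dw := ip_le D w.
have u2E : u2 = u1 + D by rewrite /D addrC subrK.
have polar : `|u2| ^+ 2 = `|u1| ^+ 2 + 2 * ip u1 D + `|D| ^+ 2 by rewrite u2E ip_polar.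
apply: (scaled_norm_le_of_quadratic (d := `|D|) l0 m0) => //.
- exact: lerB_dist.
- by rewrite addrC ler_normB.
- have DuE : ip D u2 = ip u1 D + `|D| ^+ 2 by rewrite {1}u2E ipDr ipxx ipC.
  move: mono Dw; rewrite /w !ipBr !ipDr !ipZr DuE (ipC D u1) polar; nra.
Qed.

End inner_product.

Section real_functions.
Variable R : realType.
Implicit Types (f : R -> R) (a b : R).

Lemma continuous_within_itv_dist f a b c e :
  {within `[a, b], continuous f} -> c \in `[a, b] -> 0 < e ->
  exists2 d, 0 < d & forall q, q \in `[a, b] -> `|q - c| < d -> `|f q - f c| < e.
Proof.
move=> /subspace_continuousP fc cI e0.
have /cvgrPdist_lt/(_ e e0) := fc c cI.
rewrite /within => /nbhs_ballP[d d0 Hd]; exists d => // q qI qc.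
by rewrite distrC; apply: Hd => //; rewrite /ball /= distrC.
Qed.

Lemma locally_lipschitz_on_continuous f a b :
  locally_lipschitz_on a b f -> {within `[a, b], continuous f}.
Proof.
move=> lip; apply/subspace_continuousP => c cI; apply/cvgrPdist_lt => e e0.
have [d d0 [L HL]] := lip c cI.
have L1 : 0 < `|L| + 1 by rewrite ltr_pwDr ?normr_ge0.
rewrite /within; apply/nbhs_ballP; exists (Num.min d (e / (`|L| + 1))).
  by rewrite /= lt_min d0 divr_gt0.
move=> q; rewrite /ball /= lt_min => /andP[qd qe] qI.
have := HL c q cI qI; rewrite subrr normr0 distrC => /(_ d0 qd) fcq.
apply: (le_lt_trans fcq); apply: (le_lt_trans (ler_wpM2r (normr_ge0 _) (ler_norm L))).
apply: (le_lt_trans (ler_wpM2l (normr_ge0 L) (ltW qe))).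
by rewrite mulrA ltr_pdivrMr // mulrDr mulr1 mulrC ltrDl.
Qed.

Definition dini_upper_right_ge0 f a b := forall r, a <= r < b ->
  forall e d, 0 < e -> 0 < d ->
  exists h, [/\ 0 < h, h < d, r + h <= b & f r - e * h <= f (r + h)].

Lemma dini_le f a b : a <= b -> {within `[a, b], continuous f} ->
  dini_upper_right_ge0 f a b -> f a <= f b.
Proof.
move=> ab fc dini.
suff slack e : 0 < e -> f a - e * (b - a) <= f b.
  apply/ler_addgt0Pr => g g0.
  have ba1 : 0 < b - a + 1 by lra.
  have := slack (g / (b - a + 1)) (divr_gt0 g0 ba1).
  suff : g / (b - a + 1) * (b - a) <= g by lra.
  by rewrite mulrAC ler_pdivrMr // ler_wpM2l ?(ltW g0) // lerDl.
move=> e0; pose S := [set r | a <= r <= b /\ f a - e * (r - a) <= f r].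
have Sa : S a by rewrite /S /= lexx ab subrr mulr0 subr0.
have hS : has_sup S by split; [exists a | exists b => r [/andP[]]].
have ac : a <= sup S by exact: sup_upper_bound.
have cb : sup S <= b by apply: ge_sup; [exists a | move=> r [/andP[]]].
have cI : sup S \in `[a, b] by rewrite in_itv /= ac cb.
have Sc : S (sup S).
  split; first by rewrite ac cb.
  apply/ler_addgt0Pr => g g0.
  have [d d0 fd] := continuous_within_itv_dist fc cI g0.
  have [q Sq qc] := sup_adherent d0 hS.
  have qle := sup_upper_bound hS Sq; case: Sq => /andP[aq qb] fq.
  have : `|f q - f (sup S)| < g.
    apply: fd; first by rewrite in_itv /= aq qb.
    by rewrite distrC ger0_norm ?subr_ge0 //; lra.
  have : e * (q - a) <= e * (sup S - a) by rewrite ler_wpM2l ?(ltW e0) //; lra.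
  move: (ler_norm (f q - f (sup S))); lra.
have [cb'|cb'] := eqVneq (sup S) b; first by move: Sc => [_]; rewrite cb'.
have e2 : 0 < e / 2 by rewrite divr_gt0.
have cb2 : sup S < b by rewrite lt_neqAle cb' cb.
have acb : a <= sup S < b by rewrite ac cb2.
have bc : 0 < b - sup S by rewrite subr_gt0.
have [h [h0 _ chb fh]] := dini _ acb _ _ e2 bc.
have Sch : S (sup S + h).
  split; first by apply/andP; split; lra.
  case: Sc => _ fc'; have : e / 2 * h <= e * h by rewrite ler_pM2r //; lra.
  rewrite mulrDr; lra.
by have := sup_upper_bound hS Sch; lra.
Qed.

Section classwise.
Variables (P : R -> Prop) (f : R -> R) (a b : R).
Hypothesis fc : {within `[a, b], continuous f}.
Hypothesis local_dini : forall r, a <= r < b -> forall e, 0 < e ->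
  exists2 d, 0 < d & forall h, 0 < h -> h < d -> r + h <= b ->
    (P (r + h) <-> P r) -> f r - e * h <= f (r + h).

Lemma dini_le_in_class c d : a <= c -> c <= d -> d <= b ->
  (forall q, c <= q <= d -> (P q <-> P c)) -> f c <= f d.
Proof.
move=> ac cd db Pc; apply: dini_le => //.
  by apply: continuous_subspaceW fc; apply: subset_itv; rewrite bnd_simp.
move=> r /andP[cr rd] e d' e0 d'0.
have [|dl dl0 fl] := local_dini (r := r) _ e0; first by apply/andP; split; lra.
set m := Num.min dl (Num.min d' (d - r)).
have m0 : 0 < m by rewrite !lt_min dl0 d'0 subr_gt0.
have mdl : m <= dl by rewrite ge_min lexx.
have md : m <= d' by rewrite !ge_min lexx orbT.
have mb : m <= d - r by rewrite !ge_min lexx !orbT.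
exists (m / 2); split; try lra.
apply: fl; try lra.
by rewrite (Pc (r + m / 2)) ?(Pc r) //; apply/andP; split; lra.
Qed.

Lemma dini_le_classwise : a <= b -> f a <= f b.
Proof.
move=> ab; apply: dini_le => // r arb e d e0 d0.
have [dl dl0 fl] := local_dini arb e0.
case/andP: (arb) => ar rb.
set m := Num.min dl (Num.min d (b - r)).
have m0 : 0 < m by rewrite !lt_min dl0 d0 subr_gt0.
have mdl : m <= dl by rewrite ge_min lexx.
have md : m <= d by rewrite !ge_min lexx orbT.
have mb : m <= b - r by rewrite !ge_min lexx !orbT.
(* Either some short step stays in the class of r, or all of ]r, r + m[ lies
   in the other class, where f is nondecreasing; continuity at r then gives
   f r <= f (r + m / 2). *)
have [[h [h0 hm Ph]]|switch] :=
  pselect (exists h, [/\ 0 < h, h < m & (P (r + h) <-> P r)]).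
  by exists h; split; try lra; apply: fl => //; lra.
have flip q : r < q < r + m -> (P q <-> ~ P r).
  move=> /andP[rq qm]; have /= Pq : ~ (P (r + (q - r)) <-> P r).
    by move=> Pq; apply: switch; exists (q - r); split; try lra.
  by rewrite addrC subrK in Pq; case: (pselect (P r)); case: (pselect (P q)); tauto.
exists (m / 2); split; try lra.
have em : 0 < e * (m / 2) by rewrite mulr_gt0 // divr_gt0.
suff : f r <= f (r + m / 2) by lra.
apply/ler_addgt0Pr => g g0.
have rI : r \in `[a, b] by rewrite in_itv /= ar ltW.
have [dc dc0 fcr] := continuous_within_itv_dist fc rI g0.
set eps := Num.min (m / 2) (dc / 2).
have eps0 : 0 < eps by rewrite lt_min !divr_gt0.
have epsm : eps <= m / 2 by rewrite ge_min lexx.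
have epsd : eps <= dc / 2 by rewrite ge_min lexx orbT.
have : f (r + eps) <= f (r + m / 2).
  apply: dini_le_in_class; try lra.
  by move=> q /andP[q1 q2]; rewrite (flip q) ?(flip (r + eps)) //; apply/andP; split; lra.
have : `|f (r + eps) - f r| < g.
  apply: fcr; first by rewrite in_itv /=; apply/andP; split; lra.
  by rewrite addrC addKr ger0_norm; lra.
move: (ler_norm (f r - f (r + eps))); rewrite distrC; lra.
Qed.

End classwise.

End real_functions.

Lemma derivative_on_remainder (R : realType) (H : normedModType R)
    (a b : R) (x x' : R -> H) t eta :
  derivative_on a b x x' -> t \in `[a, b] -> 0 < eta ->
  exists2 d, 0 < d & forall s, s \in `[a, b] -> t < s -> s - t < d ->
    `|x s - x t - (s - t) *: x' t| <= eta * (s - t).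
Proof.
move=> dx tI eta0; have /cvgrPdist_lt/(_ eta eta0) := dx t tI.
rewrite /within /= => /nbhs_ballP[d d0 near_t]; exists d => // s sI ts sd.
have st0 : s - t != 0 by rewrite subr_eq0 gt_eqF.
have /ltW slope : `|x' t - (s - t)^-1 *: (x s - x t)| < eta.
  apply: near_t => //; last by rewrite gt_eqF.
  by rewrite /ball /= distrC ger0_norm ?subr_ge0 ?ltW.
have -> : x s - x t - (s - t) *: x' t = (s - t) *: ((s - t)^-1 *: (x s - x t) - x' t).
  by rewrite scalerBr scalerA mulfV // scale1r.
by rewrite normrZ gtr0_norm ?subr_gt0 // mulrC ler_pM2r ?subr_gt0 // distrC.
Qed.

Lemma mul_exprn_lt (R : realDomainType) (l1 l2 f1 f2 : R) (k : nat) :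
  0 <= l2 -> l2 < l1 -> 0 <= f2 -> f2 <= f1 -> 0 < f1 ->
  l2 * f2 ^+ k < l1 * f1 ^+ k.
Proof.
move=> l20 l21 f20 f21 f10.
apply: (@le_lt_trans _ _ (l2 * f1 ^+ k)).
  by rewrite ler_wpM2l // lerXn2r // nnegrE ltW.
by rewrite ltr_pM2r // exprn_gt0.
Qed.

Section resolvent.
Variables (R : realType) (H : normedModType R) (ip : H -> H -> R).
Hypothesis ipP : is_inner_product ip.
Variable A : H -> set H.

Definition resolvent_dom (lam : R) : set H :=
  [set x | exists y u, A y u /\ x = y + lam *: u].

Definition yosida (lam : R) (x : H) : H := lam^-1 *: (x - resolvent A lam x).

Lemma resolvent_yosida lam x : lam != 0 -> x = resolvent A lam x + lam *: yosida lam x.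
Proof. by move=> lam0; rewrite scalerA mulfV // scale1r addrC subrK. Qed.

Lemma yosida_graph lam x : lam != 0 -> resolvent_dom lam x ->
  A (resolvent A lam x) (yosida lam x).
Proof.
move=> lam0 [y [u yu]].
have [v [Av xE]] : exists v, A (resolvent A lam x) v /\ x = resolvent A lam x + lam *: v.
  by apply: (@xgetPex _ 0 [set y | exists u, A y u /\ x = y + lam *: u]); exists y, u.
by rewrite /yosida {2}xE addrC addKr scalerA mulVf // scale1r.
Qed.

(* Off [resolvent_dom] the resolvent is the junk value 0, so two such points
   give the pairs (0, x/lam), which are trivially monotone: only the case of
   one point on each side escapes this lemma. *)
Lemma yosida_monotone l1 l2 x1 x2 : monotone_op ip A -> l1 != 0 -> l2 != 0 ->
  (resolvent_dom l2 x2 <-> resolvent_dom l1 x1) ->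
  0 <= ip (yosida l2 x2 - yosida l1 x1) (resolvent A l2 x2 - resolvent A l1 x1).
Proof.
move=> monoA l10 l20 dom; have [D2|N2] := pselect (resolvent_dom l2 x2).
  by apply: monoA; apply: yosida_graph => //; apply/dom.
have J0 l y : ~ resolvent_dom l y -> resolvent A l y = 0.
  by move=> N; apply: xgetPN => z [u zu]; apply: N; exists z, u.
by rewrite J0 // J0 -?dom // subrr ip0r.
Qed.

End resolvent.

Section trajectory.
Variables (R : realType) (H : normedModType R) (ip : H -> H -> R) (A : H -> set H).
Variables (t0 theta : R) (k : nat) (x x' : R -> H) (lam : R -> R).
Hypotheses (ipP : is_inner_product ip) (monoA : monotone_op ip A).
Hypotheses (theta_gt0 : 0 < theta) (k_gt0 : (0 < k)%N).
Hypothesis dx : derivative_on 0 t0 x x'.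
Hypothesis lam_gt0 : forall t, t \in `[0, t0] -> 0 < lam t.
Hypothesis ode : forall t, t \in `[0, t0] ->
  x' t + x t - resolvent A (lam t) (x t) = 0.
Hypothesis level : forall t, t \in `[0, t0] ->
  lam t * `|resolvent A (lam t) (x t) - x t| ^+ k = theta.

Local Notation J t := (resolvent A (lam t) (x t)).
Local Notation v t := (yosida A (lam t) (x t)).

Lemma resolvent_dist t : t \in `[0, t0] -> `|J t - x t| = lam t * `|v t|.
Proof.
move=> tI; rewrite /yosida normrZ normfV (gtr0_norm (lam_gt0 tI)) mulrA.
by rewrite mulfV ?gt_eqF ?lam_gt0 // mul1r distrC.
Qed.

Lemma derivative_yosida t : t \in `[0, t0] -> x' t = - (lam t *: v t).
Proof.
move=> tI; have := ode tI.
rewrite {1}(resolvent_yosida A (x t) (lt0r_neq0 (lam_gt0 tI))) addrA addrAC addrK.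
by move/eqP; rewrite addr_eq0 => /eqP.
Qed.

Lemma yosida_norm_gt0 t : t \in `[0, t0] -> 0 < `|v t|.
Proof.
move=> tI; rewrite normr_gt0; apply: contraTneq theta_gt0 => v0.
by rewrite -(level tI) resolvent_dist // v0 normr0 mulr0 expr0n gtn_eqF // mulr0 ltxx.
Qed.

Lemma lam_local_dini r e : r \in `[0, t0] -> 0 < e ->
  exists2 d, 0 < d & forall h, 0 < h -> h < d -> r + h <= t0 ->
    (resolvent_dom A (lam (r + h)) (x (r + h)) <-> resolvent_dom A (lam r) (x r)) ->
    lam r - e * h <= lam (r + h).
Proof.
move=> rI e0; have l10 := lam_gt0 rI; have a0 := yosida_norm_gt0 rI.
set c := Num.min e (lam r).
have c0 : 0 < c by rewrite lt_min e0 l10.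
have [d1 d10 remainder] := derivative_on_remainder dx rI (mulr_gt0 c0 a0).
exists (Num.min d1 1); first by rewrite lt_min d10 ltr01.
move=> h h0; rewrite lt_min => /andP[hd1 h1] rh dom.
have sI : r + h \in `[0, t0].
  by move: rI; rewrite !in_itv /= rh andbT => /andP[r0 _]; lra.
have l20 := lam_gt0 sI.
rewrite leNgt; apply/negP => drop.
(* J r + m v r = x r + h x' r is the Euler step from r. *)
set m := (1 - h) * lam r.
have m0 : 0 <= m by rewrite mulr_ge0 ?subr_ge0 ?ltW.
have step :
    `|J (r + h) + lam (r + h) *: v (r + h) - (J r + m *: v r)| <= c * `|v r| * h.
  rewrite -resolvent_yosida ?lt0r_neq0 //.
  rewrite /m mulrBl mul1r scalerBl addrA -resolvent_yosida ?lt0r_neq0 //.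
  have := remainder (r + h) sI.
  rewrite addrAC subrr add0r derivative_yosida // scalerN scalerA opprK.
  by rewrite opprD opprK addrA; apply; lra.
have est := monotone_pair_estimate ipP (ltW l20) m0
  (yosida_monotone ipP monoA (lt0r_neq0 l10) (lt0r_neq0 l20) dom).
have ce : c <= e by rewrite ge_min lexx.
have cl : c <= lam r by rewrite ge_min lexx orbT.
have max_le : Num.max (lam (r + h)) m <= lam r - h * c.
  have := ler_wpM2l (ltW h0) ce; have := ler_wpM2l (ltW h0) cl.
  by rewrite /m; have [_|_] := lerP (lam (r + h)) ((1 - h) * lam r); lra.
have dist_le : lam (r + h) * `|v (r + h)| <= lam r * `|v r|.
  have : Num.max (lam (r + h)) m * `|v r| <= (lam r - h * c) * `|v r|.
    by rewrite ler_wpM2r.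
  nra.
have lam_lt : lam (r + h) < lam r by have := mulr_gt0 e0 h0; lra.
have := mul_exprn_lt k (ltW l20) lam_lt (mulr_ge0 (ltW l20) (normr_ge0 _)) dist_le
  (mulr_gt0 l10 a0).
by rewrite -!resolvent_dist // !level // ltxx.
Qed.

End trajectory.

Theorem lemma2p5 (R : realType) (H : completeNormedModType R)
  (ip : H -> H -> R) (A : H -> set H) (theta : R) (p : nat) (t0 : R)
  (x x' : R -> H) (lam : R -> R) :
  is_inner_product ip ->
  maximal_monotone ip A ->
  (exists z, A z 0) ->
  0 < theta -> (1 <= p)%N -> 0 < t0 ->
  C1_on 0 t0 x x' ->
  locally_lipschitz_on 0 t0 lam ->
  (forall t, t \in `[0, t0] -> 0 < lam t) ->
  (forall t, t \in `[0, t0] ->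
     x' t + x t - resolvent A (lam t) (x t) = 0) ->
  (forall t, t \in `[0, t0] ->
     lam t * `|resolvent A (lam t) (x t) - x t| ^+ (p - 1) = theta) ->
  ~ A (x 0) 0 ->
  forall s t, s \in `[0, t0] -> t \in `[0, t0] -> s <= t -> lam s <= lam t.
Proof.
move=> ipP [monoA _] _ theta0 p1 _ [dx _] lip lam0 ode level _ s t sI tI st.
have [p_eq1|p_neq1] := eqVneq p 1%N.
  by move: (level s sI) (level t tI); rewrite p_eq1 subnn !expr0 !mulr1 => -> ->.
have k_gt0 : (0 < p - 1)%N by rewrite subn_gt0 ltn_neqAle eq_sym p_neq1.
move: (sI) (tI); rewrite !in_itv /= => /andP[s0 _] /andP[_ tt0].
apply: (dini_le_classwise (P := fun r => resolvent_dom A (lam r) (x r))) => //.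
  apply: continuous_subspaceW (locally_lipschitz_on_continuous lip).
  by apply: subset_itv; rewrite bnd_simp.
move=> r /andP[sr rt] e e0.
have rI : r \in `[0, t0] by rewrite in_itv /=; apply/andP; split; lra.
have [d d0 step] := lam_local_dini ipP monoA theta0 k_gt0 dx lam0 ode level rI e0.
by exists d => // h h0 hd rh; apply: step => //; lra.
Qed.
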